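(* Let $K$ be a finite simplicial complex, $n$ a positive integer, $\sigma_1,\ldots,\sigma_m$ the $(n+1)$-simplices of $K$, and $f$ a generic injective filtration function on $K$. Let $\alpha$ be an $n$-cycle whose class $[\alpha]\in H_n(K^f_a)$ is born at $a$ and terminated at a finite value $b>a$, let $D=(0,\frac{b-a}{2}]$, and let $\Sigma_\varepsilon$ ($\varepsilon\in D$) be as in the context. Assume $|\Sigma_x|\ge 2$ for some $x\in D$. Let $t_0=\max\{x\in D: |\Sigma_x|=1\}$ and write $\Sigma_{t_0}=\{\Delta_1\}$. Then there exist indices $i,j$ with $f(\sigma_j)-t_0=f(\sigma_i)+t_0$. Choose $t\in D$, $t>t_0$, such that $|\Sigma_t|=\lim_{x\searrow t_0}|\Sigma_x|$. Then: (1) $\Delta_1\in\{\sigma_i,\sigma_j\}$; (2) for every $s<t_0$, $\Delta_1$ is a maximal simplex of $K^f_{f(\Delta_1)+2s}$ (i.e. it is not a proper face of any simplex of $K^f_{f(\Delta_1)+2s}$); (3) if $\Delta_1=\sigma_j$, then $\{\sigma_i,\sigma_j\}\subseteq\Sigma_t$ and $\sigma_i$ is a terminal simplex in $K^f$ (it terminates a nontrivial homology class); (4) if $\Delta_1=\sigma_i$, then $\{\sigma_i,\sigma_j\}\subseteq\Sigma_t$ and $\sigma_j$ is a birth simplex in $K^f$ (it creates a nontrivial homology class).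
   Context: A filtration function on a finite simplicial complex $K$ is a map $f\colon K\to\mathbb{R}$ with $f(\sigma)\le f(\tau)$ whenever $\sigma$ is a face of $\tau$. An injective filtration function $f$ is generic if $|f(\sigma_i)-f(\sigma_j)|=|f(\sigma_{i'})-f(\sigma_{j'})|$ with $i\ne j$, $i'\ne j'$ implies $\{i,j\}=\{i',j'\}$. Sublevel complexes are $K^f_r=f^{-1}((-\infty,r])$; homology is with coefficients in a fixed field. For a nontrivial class $[\alpha]\in H_n(K^f_r)$, its birth is the infimum of $q\le r$ such that $[\alpha]$ is in the image of $H_n(K^f_q)\to H_n(K^f_r)$, and its termination scale is the infimum of $q\ge r$ such that $[\alpha]$ maps to $0$ in $H_n(K^f_q)$. Since $f$ is injective, each simplex $\sigma$ either is a birth simplex (adding it to $K^f_{<f(\sigma)}$ creates a new nontrivial homology class, i.e. $\partial\sigma$ is already a boundary there) or a terminal simplex (adding it makes a nontrivial homology class trivial). $\|f-g\|_\infty=\max_{\sigma\in K}|f(\sigma)-g(\sigma)|$. An injective $\varepsilon$-perturbation of $f$ is an injective filtration function $g$ with $\|f-g\|_\infty\le\varepsilon$. For such $g$, $\Delta_{g,\alpha}$ is the simplex $\tau$ such that $\alpha$ is a boundary in $K^g_{g(\tau)}$ but not in $K^g_r$ for $r<g(\tau)$, and $\Sigma_\varepsilon=\{\Delta_{g,\alpha}: g\text{ an injective }\varepsilon\text{-perturbation of }f\}$. *)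

From HB Require Import structures.
From mathcomp Require Import all_boot all_order all_algebra.
From mathcomp Require Import all_classical all_reals all_analysis.
Set Implicit Arguments. Unset Strict Implicit. Unset Printing Implicit Defensive.
Import Order.TTheory GRing.Theory Num.Theory.
Local Open Scope ring_scope.

Section Simplicial.
Variables (V : finType) (F : fieldType) (R : realType).

(* A finite abstract simplicial complex on vertex set V: a set of nonempty
   vertex sets closed under nonempty subsets.  dim sigma = #|sigma| - 1. *)
Definition simplicial_complex (K : {set {set V}}) : Prop :=
  (forall s, s \in K -> s != finset.set0) /\
  (forall s t : {set V}, s \in K -> t \subset s -> t != finset.set0 -> t \in K).

Definition chain := {ffun {set V} -> F}.

(* incidence number [s : t] with the orientation induced by enum_rank *)
Definition incidence (s t : {set V}) : F :=
  \sum_(v in s | t == s :\ v)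
     (-1) ^+ #|[set w in s | (enum_rank w < enum_rank v)%N]|.

Definition bd (c : chain) : chain :=
  [ffun t => \sum_(s : {set V}) c s * incidence s t].

Definition elem (s : {set V}) : chain := [ffun t => (t == s)%:R].

Definition chain_in (L : {set {set V}}) (k : nat) (c : chain) : Prop :=
  forall t, c t != 0 -> t \in L /\ #|t| = k.+1.

Definition is_cycle (L : {set {set V}}) (k : nat) (c : chain) : Prop :=
  chain_in L k c /\ bd c = 0.

Definition is_boundary (L : {set {set V}}) (k : nat) (c : chain) : Prop :=
  exists d : chain, chain_in L k.+1 d /\ bd d = c.

Definition filtration (K : {set {set V}}) (f : {set V} -> R) : Prop :=
  forall s t : {set V}, s \in K -> t \in K -> s \subset t -> f s <= f t.

Definition injective_on (K : {set {set V}}) (f : {set V} -> R) : Prop :=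
  {in K &, injective f}.

Definition generic (K : {set {set V}}) (f : {set V} -> R) : Prop :=
  injective_on K f /\
  forall s t s' t', s \in K -> t \in K -> s' \in K -> t' \in K ->
    s != t -> s' != t' -> `|f s - f t| = `|f s' - f t'| ->
    (s = s' /\ t = t') \/ (s = t' /\ t = s').

Definition sublevel (K : {set {set V}}) (f : {set V} -> R) (r : R) :
  {set {set V}} := [set s in K | f s <= r].

Definition sublevel_lt (K : {set {set V}}) (f : {set V} -> R) (r : R) :
  {set {set V}} := [set s in K | f s < r].

(* [alpha] in H_k(K^f_r) lies in the image of H_k(K^f_q) -> H_k(K^f_r) *)
Definition in_image K f k (alpha : chain) (q r : R) : Prop :=
  exists beta : chain, is_cycle (sublevel K f q) k beta /\
    is_boundary (sublevel K f r) k (alpha - beta).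

Local Open Scope classical_set_scope.

Definition birth K f k (alpha : chain) (r : R) : R :=
  inf [set q : R | q <= r /\ in_image K f k alpha q r].

Definition death_set K f k (alpha : chain) (r : R) : set R :=
  [set q : R | r <= q /\ is_boundary (sublevel K f q) k alpha].

Definition termination K f k (alpha : chain) (r : R) : R :=
  inf (death_set K f k alpha r).

Local Close Scope classical_set_scope.

Definition birth_simplex K f (s : {set V}) : Prop :=
  is_boundary (sublevel_lt K f (f s)) (#|s|.-2) (bd (elem s)).

Definition terminal_simplex K f (s : {set V}) : Prop :=
  ~ birth_simplex K f s.

Definition inj_perturbation (K : {set {set V}}) (f g : {set V} -> R) (eps : R) : Prop :=
  filtration K g /\ injective_on K g /\
  forall s, s \in K -> `|f s - g s| <= eps.

Definition Delta_is (K : {set {set V}}) (g : {set V} -> R) k (alpha : chain) (tau : {set V})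
  : Prop :=
  tau \in K /\ is_boundary (sublevel K g (g tau)) k alpha /\
  forall r, r < g tau -> ~ is_boundary (sublevel K g r) k alpha.

Definition Sigma (K : {set {set V}}) f k (alpha : chain) (eps : R) : {set {set V}} :=
  [set tau | `[< exists g, inj_perturbation K f g eps /\
                           Delta_is K g k alpha tau >]].

Definition maximal_in (L : {set {set V}}) (s : {set V}) : Prop :=
  forall t : {set V}, t \in L -> ~ (s \proper t).

End Simplicial.

(* For an injective filtration g, the simplex Delta_{g,alpha} is the first
   (n+1)-simplex, in the order of g, whose addition kills alpha.  Hence tau lies
   in Sigma_e iff some set L of (n+1)-simplices satisfies: L does not kill
   alpha, L + tau does, and no element of L + tau exceeds an (n+1)-simplex
   outside L by 2e or more.  Such an order is realised by an e-perturbation: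
   clamp f to a staircase around the midpoint of the extreme values involved,
   then break ties by adding a small multiple of f.
   Since f is an e-perturbation of itself, its first killer lies in every
   Sigma_e, so Sigma_t0 = {Delta1} makes Delta1 the first killer for f.  Just
   above t0 the only pair that may newly change order is, by genericity, the
   unique pair (sigma_j, sigma_i) with f sigma_j - f sigma_i = 2 t0; comparing a
   cut that witnesses a new element of Sigma_x with cuts at scale t0 shows that
   Delta1 is sigma_i or sigma_j, and which of the two is the birth or terminal
   simplex.  Finally, a coface c of Delta1 with f c - f Delta1 < 2 t0 would
   turn, through the cycle bd c, into a second killer lying in Sigma_t0. *)

From HB Require Import structures.
From mathcomp Require Import all_boot all_order all_algebra.
From mathcomp Require Import boolp reals.
From mathcomp Require Import ring lra.
Import Order.TTheory GRing.Theory Num.Theory.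

Set Implicit Arguments.
Unset Strict Implicit.
Unset Printing Implicit Defensive.

Local Open Scope ring_scope.

Lemma antisymmetric_sum_eq0 (T : finType) (M : zmodType) (G : T -> T -> M) :
  (forall v, G v v = 0) -> (forall v u, G u v = - G v u) ->
  \sum_v \sum_u G v u = 0.
Proof.
move=> G_diag G_anti.
pose A v u := if (enum_rank u < enum_rank v)%N then G v u else 0.
have G_split v u : G v u = A v u - A u v.
  rewrite /A; case: (ltngtP (enum_rank u) (enum_rank v)) => [_|_|/val_inj].
  - by rewrite subr0.
  - by rewrite G_anti add0r.
  - by move/enum_rank_inj ->; rewrite G_diag subrr.
under eq_bigr do under eq_bigr do rewrite G_split.
rewrite (eq_bigr (fun v => \sum_u A v u - \sum_u A u v)); last first.
  by move=> v _; rewrite sumrB.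
by rewrite sumrB exchange_big subrr.
Qed.

Section Boundary.
Variables (V : finType) (F : fieldType).

Definition face_sign (c : {set V}) (v : V) : F :=
  (-1) ^+ #|[set w in c | (enum_rank w < enum_rank v)%N]|.

Lemma face_sign_setD1_gt (c : {set V}) (u v : V) :
  (enum_rank u < enum_rank v)%N -> face_sign (c :\ v) u = face_sign c u.
Proof.
move=> lt_uv; rewrite /face_sign; congr (_ ^+ _); apply: eq_card => w; rewrite !inE.
by case: (eqVneq w v) => [->|//]; rewrite ltnNge ltnW ?andbF.
Qed.

Lemma face_sign_setD1_lt (c : {set V}) (u v : V) : u \in c ->
  (enum_rank u < enum_rank v)%N -> face_sign (c :\ u) v = - face_sign c v.
Proof.
move=> uc lt_uv; rewrite /face_sign.
have -> : [set w in c | (enum_rank w < enum_rank v)%N] =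
          u |: [set w in c :\ u | (enum_rank w < enum_rank v)%N].
  by apply/setP => w; rewrite !inE; case: (eqVneq w u) => [->|]; rewrite ?uc ?lt_uv.
by rewrite cardsU1 !inE eqxx /= add1n exprS mulN1r opprK.
Qed.

Lemma face_sign_swap (c : {set V}) (u v : V) : u \in c -> v \in c -> u != v ->
  face_sign c u * face_sign (c :\ u) v = - (face_sign c v * face_sign (c :\ v) u).
Proof.
move=> uc vc /eqP neq_uv.
case: (ltngtP (enum_rank u) (enum_rank v)) => [lt|lt|/val_inj/enum_rank_inj //].
  by rewrite (face_sign_setD1_lt uc lt) (face_sign_setD1_gt c lt); ring.
by rewrite (face_sign_setD1_lt vc lt) (face_sign_setD1_gt c lt); ring.
Qed.

Lemma bd_lincomb (x y : chain V F) (k : F) :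
  bd [ffun t => x t - k * y t] = [ffun t => bd x t - k * bd y t].
Proof.
apply/ffunP => t; rewrite !ffunE mulr_sumr -sumrB; apply: eq_bigr => s _.
by rewrite ffunE; ring.
Qed.

Lemma bd_elem (c : {set V}) : bd (elem F c) = [ffun t => incidence F c t].
Proof.
apply/ffunP => t; rewrite !ffunE (bigD1 c) //= ffunE eqxx mul1r big1 ?addr0 //.
by move=> s /negPf ne_sc; rewrite ffunE ne_sc mul0r.
Qed.

Lemma bd_elem_supp (c w : {set V}) :
  bd (elem F c) w != 0 -> exists2 u, u \in c & w = c :\ u.
Proof.
have [u /andP[uc /eqP ->] _ | none] := pickP (fun u => (u \in c) && (w == c :\ u)).
  by exists u.
by rewrite bd_elem ffunE /incidence big_pred0 ?eqxx.
Qed.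

Lemma bd_elem_facet (s : {set V}) (v : V) : v \notin s -> bd (elem F (v |: s)) s != 0.
Proof.
move=> vNs; rewrite bd_elem ffunE /incidence (big_pred1 v) ?signr_eq0 // => u /=.
rewrite in_setU1; have [-> | ne_uv] := eqVneq u v; first by rewrite setU1K // eqxx.
apply/negbTE/negP => /andP[us /eqP s_eq].
by move: us; rewrite s_eq !inE eqxx.
Qed.

Lemma bd_bd_elem (c t : {set V}) : bd (bd (elem F c)) t = 0.
Proof.
rewrite bd_elem ffunE; under eq_bigr do rewrite ffunE.
pose G v u := if [&& v \in c, u \in c :\ v & t == c :\ v :\ u]
              then face_sign c v * face_sign (c :\ v) u else 0.
suff -> : \sum_s incidence F c s * incidence F s t = \sum_v \sum_u G v u.
  apply: antisymmetric_sum_eq0 => [v|v u]; first by rewrite /G !inE eqxx andbF.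
  have [-> | ne_vu] := eqVneq u v; first by rewrite /G !inE eqxx !andbF oppr0.
  rewrite /G; have -> : c :\ u :\ v = c :\ v :\ u.
    by apply/setP => w; rewrite !inE andbCA.
  rewrite !inE ne_vu eq_sym ne_vu /=.
  case uc: (u \in c); case vc: (v \in c); case: (t == _); rewrite /= ?oppr0 //.
  exact: face_sign_swap.
under eq_bigr do rewrite /incidence big_distrl /=.
rewrite (exchange_big_dep (mem c)) /=; last by move=> s v _ /andP[].
rewrite big_mkcond; apply: eq_bigr => v _ /=.
case: ifP => vc; last by rewrite big1 // => u _; rewrite /G vc.
rewrite (big_pred1 (c :\ v)); last by move=> s /=; rewrite vc.
rewrite /incidence big_distrr big_mkcond; apply: eq_bigr => u _ /=.
by rewrite /G vc /face_sign; case: ifP.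
Qed.

End Boundary.

Section FiniteExtrema.
Variables (d : Order.disp_t) (R : orderType d) (T : finType).
Implicit Types (A B S : {set T}) (rho : T -> R).

Lemma ex_argmin A rho : A != set0 ->
  exists2 w, w \in A & forall p, p \in A -> (rho w <= rho p)%O.
Proof. by case/set0Pn => x xA; case: (arg_minP rho xA) => w; exists w. Qed.

Lemma ex_argmax A rho : A != set0 ->
  exists2 w, w \in A & forall p, p \in A -> (rho p <= rho w)%O.
Proof. by case/set0Pn => x xA; case: (arg_maxP rho xA) => w; exists w. Qed.

Lemma ex_threshold (Q : {set T} -> Prop) rho S :
  (forall A B, A \subset B -> Q A -> Q B) -> Q S -> ~ Q set0 ->
  exists2 w, w \in S &
    Q [set p in S | (rho p <= rho w)%O] /\ ~ Q [set p in S | (rho p < rho w)%O].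
Proof.
move=> Q_mono QS notQ0.
pose W := [set w in S | `[< Q [set p in S | (rho p <= rho w)%O] >]].
have /(ex_argmin rho)[w] : W != set0.
  have /(ex_argmax rho)[x xS x_max] : S != set0.
    by apply: contra_notN notQ0 => /eqP <-.
  apply/set0Pn; exists x; rewrite inE xS; apply/asboolP.
  by apply: Q_mono QS; apply/subsetP => p pS; rewrite inE pS x_max.
rewrite inE => /andP[wS /asboolP Qw] w_min.
exists w => //; split => // Qlt.
have /(ex_argmax rho)[v] : [set p in S | (rho p < rho w)%O] != set0.
  by apply: contra_notN notQ0 => /eqP <-.
rewrite inE => /andP[vS lt_vw] v_max.
suff /w_min : v \in W by rewrite leNgt lt_vw.
rewrite inE vS; apply/asboolP; apply: Q_mono Qlt; apply/subsetP => p p_lt.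
by move: (p_lt); rewrite inE => /andP[pS _]; rewrite inE pS v_max.
Qed.

End FiniteExtrema.

Lemma ex_pos_lower_bound (R : realDomainType) (T : finType) (A : {set T}) (phi : T -> R) :
  (forall p, p \in A -> 0 < phi p) ->
  exists2 m, 0 < m & forall p, p \in A -> m <= phi p.
Proof.
move=> phi_gt0; have [-> | /(ex_argmin phi)[w wA w_min]] := eqVneq A set0.
  by exists 1 => // p; rewrite inE.
by exists (phi w); [exact: phi_gt0 | exact: w_min].
Qed.

Lemma ex_norm_bound (R : realDomainType) (T : finType) (A : {set T}) (phi : T -> R) :
  exists2 M, 0 <= M & forall v, v \in A -> `|phi v| <= M.
Proof.
exists (\sum_(w in A) `|phi w|); first by rewrite sumr_ge0.
by move=> v vA; rewrite (bigD1 v) //= lerDl sumr_ge0.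
Qed.

Section Clamp.
Variable R : realDomainType.

Definition clamp (x hi lo : R) : R := Num.max (Num.min x hi) lo.

Lemma clamp_le (x x' hi hi' lo lo' : R) :
  x <= x' -> hi <= hi' -> lo <= lo' -> clamp x hi lo <= clamp x' hi' lo'.
Proof. by move=> le_x le_hi le_lo; apply: le_max2 => //; apply: le_min2. Qed.

Lemma clamp_ge_lo (x hi lo : R) : lo <= clamp x hi lo.
Proof. by rewrite le_max lexx orbT. Qed.

Lemma clamp_le_hi (x hi lo : R) : lo <= hi -> clamp x hi lo <= hi.
Proof. by move=> le_lo_hi; rewrite ge_max le_lo_hi ge_min lexx orbT. Qed.

Lemma clamp_dist (x hi lo c : R) :
  x - hi <= c -> lo - x <= c -> 0 <= c -> `|clamp x hi lo - x| <= c.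
Proof.
rewrite /clamp ler_norml /Num.max /Num.min => *.
by case: (ltP x hi) => ?; case: ltP => ?; apply/andP; split; lra.
Qed.

End Clamp.

Section Kills.
Variables (V : finType) (F : fieldType) (alpha : chain V F).

Definition kills (S : {set {set V}}) : Prop :=
  exists d : chain V F, (forall t, d t != 0 -> t \in S) /\ bd d = alpha.

Lemma killsS (S S' : {set {set V}}) : S \subset S' -> kills S -> kills S'.
Proof. by move=> /subsetP sub [d [d_S bd_d]]; exists d; split=> // t /d_S/sub. Qed.

Lemma is_boundary_kills (L : {set {set V}}) k :
  is_boundary L k alpha <-> kills [set p in L | #|p| == k.+2].
Proof.
split=> -[d [d_L bd_d]]; exists d; split=> // t /d_L.
  by case=> tL size_t; rewrite inE tL size_t eqxx.
by rewrite inE => /andP[tL /eqP].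
Qed.

Lemma kills_exchange (S : {set {set V}}) (z : chain V F) (tau : {set V}) :
  bd z = 0 -> z tau != 0 -> kills S ->
  kills ((S :|: [set t | z t != 0]) :\ tau).
Proof.
move=> bd_z z_tau [d [d_S bd_d]].
exists [ffun t => d t - (d tau / z tau) * z t]; split.
  move=> t; rewrite ffunE !inE.
  have [-> | ne_t] := eqVneq t tau; first by rewrite divfK // subrr eqxx.
  have [d_t0 | /d_S -> //] := eqVneq (d t) 0.
  by rewrite d_t0 sub0r oppr_eq0 mulf_eq0 => /norP[_ ->]; rewrite orbT.
by rewrite bd_lincomb bd_z bd_d; apply/ffunP => t; rewrite !ffunE mulr0 subr0.
Qed.

Section FirstKiller.
Variables (R : realType) (rho : {set V} -> R).

Definition first_killer (S : {set {set V}}) (w : {set V}) : Prop :=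
  [/\ w \in S, kills [set p in S | rho p <= rho w] &
      ~ kills [set p in S | rho p < rho w]].

Lemma ex_first_killer (S : {set {set V}}) :
  kills S -> ~ kills set0 -> exists w, first_killer S w.
Proof.
by move=> kS nk0; have [w wS [k nk]] := ex_threshold rho (@killsS) kS nk0; exists w.
Qed.

End FirstKiller.

End Kills.

Section BirthSimplex.
Variables (V : finType) (F : fieldType) (R : realType).
Variables (K : {set {set V}}) (f : {set V} -> R).

Lemma birth_simplexP (s : {set V}) : (1 < #|s|)%N ->
  @birth_simplex V F R K f s <->
  exists2 z : chain V F, bd z = 0 & z s != 0 /\ forall p, z p != 0 ->
    p \in s |: [set q in sublevel_lt K f (f s) | #|q| == #|s|].
Proof.
move=> s_gt1; have size_s : (#|s|.-2).+2 = #|s| by case: #|s| s_gt1 => [|[]].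
rewrite /birth_simplex is_boundary_kills size_s; split.
- case=> d [d_lt bd_d]; exists [ffun p => elem F s p - 1 * d p].
    by rewrite bd_lincomb bd_d; apply/ffunP => p; rewrite !ffunE mul1r subrr.
  have d_s : d s = 0.
    by apply: contraTeq isT => /d_lt; rewrite !inE ltxx andbF.
  split=> [|p]; first by rewrite !ffunE eqxx d_s mulr0 subr0 oner_eq0.
  rewrite !ffunE !inE; have [// | ne_ps] := eqVneq p s.
  by rewrite /= mulr0n sub0r oppr_eq0 mul1r => /d_lt; rewrite !inE.
- case=> z bd_z [z_s z_supp]; exists [ffun p => elem F s p - (z s)^-1 * z p].
  split; last first.
    by rewrite bd_lincomb bd_z; apply/ffunP => p; rewrite !ffunE mulr0 subr0.
  move=> p; rewrite !ffunE; have [-> | ne_ps] := eqVneq p s.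
    by rewrite mulVf // subrr eqxx.
  rewrite /= mulr0n sub0r oppr_eq0 mulf_eq0 invr_eq0 (negbTE z_s) /= => /z_supp.
  by rewrite !inE (negbTE ne_ps).
Qed.

End BirthSimplex.

Lemma ex_injective_nudge (V : finType) (R : realType) (K : {set {set V}})
    (f g0 : {set V} -> R) (delta : R) :
  filtration K f -> injective_on K f -> filtration K g0 -> 0 < delta ->
  exists g : {set V} -> R, [/\ filtration K g, injective_on K g,
    forall v, v \in K -> `|g v - g0 v| <= delta &
    forall v w, v \in K -> w \in K -> g0 v < g0 w -> g v < g w].
Proof.
move=> f_filt f_inj g0_filt delta_gt0.
have [M M_ge0 f_le_M] := ex_norm_bound K f.
pose gaps := [set vw | [&& vw.1 \in K, vw.2 \in K & g0 vw.1 < g0 vw.2]].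
have [m m_gt0 m_le] := @ex_pos_lower_bound _ _ gaps (fun vw => g0 vw.2 - g0 vw.1)
  (fun vw => ltac:(by rewrite inE subr_gt0 => /and3P[])).
pose c := Num.min delta m; pose eps := c / (2 * (M + 1)).
have c_gt0 : 0 < c by rewrite lt_min delta_gt0 m_gt0.
have eps_gt0 : 0 < eps by rewrite divr_gt0 // mulr_gt0 // ltr_wpDl.
have eps_f v : v \in K -> `|eps * f v| < c / 2.
  move=> vK; rewrite normrM gtr0_norm //.
  have -> : c / 2 = eps * (M + 1) by rewrite /eps; field; lra.
  by rewrite ltr_pM2l // (le_lt_trans (f_le_M v vK)) ?ltrDl.
have gap v w : v \in K -> w \in K -> g0 v < g0 w -> m <= g0 w - g0 v.
  by move=> vK wK lt_vw; apply: (m_le (v, w)); rewrite inE vK wK.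
have c_le : c <= delta /\ c <= m by rewrite !ge_min !lexx orbT.
exists (fun v => g0 v + eps * f v); split.
- move=> v w vK wK vw; apply: lerD; first exact: g0_filt.
  by rewrite ler_pM2l //; apply: f_filt.
- move=> v w vK wK /= eq_g.
  have [eq_g0 | ne_g0] := eqVneq (g0 v) (g0 w).
    apply: f_inj => //; apply: (mulfI (lt0r_neq0 eps_gt0)).
    by move: eq_g; rewrite eq_g0 => /addrI.
  exfalso; move: (eps_f v vK) (eps_f w wK); rewrite !ltr_norml => /andP[? ?] /andP[? ?].
  by move: ne_g0; rewrite neq_lt => /orP[/(gap v w vK wK) | /(gap w v wK vK)]; lra.
- move=> v vK; rewrite addrAC subrr add0r.
  by apply: le_trans (ltW (eps_f v vK)) _; case: c_le; lra.
- move=> v w vK wK /(gap v w vK wK) lt_vw.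
  by move: (eps_f v vK) (eps_f w wK); rewrite !ltr_norml => /andP[? ?] /andP[? ?]; lra.
Qed.

Section Perturbation.
Variables (V : finType) (F : fieldType) (R : realType).
Variables (K : {set {set V}}) (n : nat) (alpha : chain V F).

Definition simplices (k : nat) : {set {set V}} := [set p in K | #|p| == k.+1].

Lemma simplicesK k p : p \in simplices k -> p \in K.
Proof. by rewrite inE => /andP[]. Qed.

Lemma simplices_size k p : p \in simplices k -> #|p| = k.+1.
Proof. by rewrite inE => /andP[_ /eqP]. Qed.

Lemma simplices_antichain k p q :
  p \in simplices k -> q \in simplices k -> p \subset q -> p = q.
Proof.
move=> /simplices_size size_p /simplices_size size_q pq.
by apply/eqP; rewrite eqEcard pq size_p size_q leqnn.
Qed.

Local Notation P := (simplices n.+1).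

Lemma Delta_isE (g : {set V} -> R) tau : injective_on K g ->
  Delta_is K g n alpha tau <-> first_killer alpha g P tau.
Proof.
move=> g_inj.
have bdE r : is_boundary (sublevel K g r) n alpha <-> kills alpha [set p in P | g p <= r].
  have -> : [set p in P | g p <= r] = [set p in sublevel K g r | #|p| == n.+2].
    by apply/setP => p; rewrite !inE andbAC.
  exact: is_boundary_kills.
split=> [[tauK [/bdE k_le not_bd]] | [tauP k_le nk_lt]].
  have nk_lt : ~ kills alpha [set p in P | g p < g tau].
    move=> k_lt; have [m m_gt0 m_le] :=
      @ex_pos_lower_bound _ _ [set p in P | g p < g tau] (fun p => g tau - g p)
        (fun p => ltac:(by rewrite inE subr_gt0 => /andP[])).
    apply: (not_bd (g tau - m)); first by rewrite gtrDl oppr_lt0.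
    apply/bdE; apply: killsS k_lt; apply/subsetP => p p_lt.
    by move: (p_lt) (m_le p p_lt); rewrite !inE => /andP[-> _] /= ?; lra.
  suff tauP : tau \in P by [].
  apply/negPn/negP => tauNP; apply: nk_lt; apply: killsS k_le; apply/subsetP => p.
  case/setIdP => pP; rewrite le_eqVlt => /orP[/eqP eq_g | lt_g]; last exact/setIdP.
  by move: tauNP; rewrite -(g_inj _ _ (simplicesK pP) tauK eq_g) pP.
split; [exact: simplicesK tauP | split; first exact/bdE].
move=> r lt_r /bdE k_r; apply: nk_lt; apply: killsS k_r; apply/subsetP => p.
by rewrite !inE => /andP[-> le_r]; apply: le_lt_trans lt_r.
Qed.

Lemma ex_first_killer_simplices (f : {set V} -> R) (L : {set {set V}}) q :
  ~ is_boundary L n alpha -> is_boundary (sublevel K f q) n alpha ->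
  exists w, first_killer alpha f P w.
Proof.
move=> not_bd /is_boundary_kills bd_q; apply: ex_first_killer.
  apply: killsS bd_q; apply/subsetP => p /setIdP[/setIdP[pK _] size_p].
  by apply/setIdP.
move=> k0; apply: not_bd; apply/is_boundary_kills; apply: killsS k0; exact: sub0set.
Qed.

Lemma birth_simplex_of_kills (f : {set V} -> R) s (S : {set {set V}}) :
  s \in P -> S \subset [set p in P | f p < f s] ->
  kills alpha (s |: S) -> ~ kills alpha S -> kills alpha [set p in P | f p < f s] ->
  @birth_simplex V F R K f s.
Proof.
move=> sP S_lt [d [d_supp bd_d]] nk_S [d1 [d1_supp bd_d1]].
have s_gt1 : (1 < #|s|)%N by rewrite (simplices_size sP).
apply/(birth_simplexP F K f s_gt1); exists [ffun p => d p - 1 * d1 p].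
  by rewrite bd_lincomb bd_d bd_d1; apply/ffunP => p; rewrite !ffunE mul1r subrr.
have d1_s : d1 s = 0.
  by apply/eqP; apply: contraTT isT => /d1_supp /setIdP[_]; rewrite ltxx.
have lt_in p : p \in [set p in P | f p < f s] ->
    p \in s |: [set q in sublevel_lt K f (f s) | #|q| == #|s|].
  case/setIdP=> /setIdP[pK /eqP size_p] lt_p; apply/setU1P; right.
  by apply/setIdP; rewrite size_p (simplices_size sP); split=> //; apply/setIdP.
split=> [|p]; rewrite ffunE.
  rewrite d1_s mulr0 subr0; apply/negP => /eqP d_s; apply: nk_S; exists d.
  split=> // p d_p; case/setU1P: (d_supp p d_p) => // eq_p.
  by move: d_p; rewrite eq_p d_s eqxx.
have [d_p0 | /d_supp /setU1P[-> | /(subsetP S_lt)/lt_in //]] := eqVneq (d p) 0.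
  by rewrite d_p0 sub0r oppr_eq0 mul1r => /d1_supp/lt_in.
by rewrite setU11.
Qed.

Lemma birth_simplex_redundant (f : {set V} -> R) s (S : {set {set V}}) :
  @birth_simplex V F R K f s -> s \in P -> s \notin S ->
  [set p in P | f p < f s] \subset S -> kills alpha (s |: S) -> kills alpha S.
Proof.
move=> s_birth sP sNS lt_S k_sS.
have s_gt1 : (1 < #|s|)%N by rewrite (simplices_size sP).
have [z bd_z [z_s z_supp]] := (birth_simplexP F K f s_gt1).1 s_birth.
apply: killsS (kills_exchange bd_z z_s k_sS).
apply/subsetP => p /setD1P[ne_p /setUP[/setU1P[eq_p | //] | ]].
  by move: ne_p; rewrite eq_p eqxx.
rewrite inE => /z_supp /setU1P[eq_p | /setIdP[/setIdP[pK lt_p] /eqP size_p]].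
  by move: ne_p; rewrite eq_p eqxx.
apply: (subsetP lt_S); apply/setIdP; split=> //.
by apply/setIdP; split=> //; rewrite size_p (simplices_size sP).
Qed.

(* For [0 < e], [tau \in Sigma K f n alpha e] holds iff [kill_step tau L] and
   [close_pairs f e tau L] hold for some [L] (lemmas [Sigma_kill_step] and
   [kill_step_Sigma]); [L] is the set of simplices that a perturbation puts
   below [tau]. *)
Definition kill_step (tau : {set V}) (L : {set {set V}}) : Prop :=
  [/\ tau |: L \subset P, tau \notin L, kills alpha (tau |: L) & ~ kills alpha L].

Definition close_pairs (f : {set V} -> R) (e : R) tau (L : {set {set V}}) : Prop :=
  forall p u, p \in tau |: L -> u \in P :\: L -> f p - f u < 2 * e.

Lemma first_killer_kill_step (g : {set V} -> R) (S : {set {set V}}) tau :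
  injective_on K g -> S \subset P ->
  first_killer alpha g S tau -> kill_step tau [set p in S | g p < g tau].
Proof.
move=> g_inj S_P [tauS k_le nk_lt]; split=> //.
- by rewrite subUset sub1set (subsetP S_P) //; apply/subsetP => p /setIdP[/(subsetP S_P)].
- by rewrite inE ltxx andbF.
- apply: killsS k_le; apply/subsetP => p /setIdP[pS].
  rewrite le_eqVlt => /orP[/eqP eq_g | lt_g]; apply/setU1P; last by right; apply/setIdP.
  by left; apply: g_inj eq_g; apply: simplicesK; apply: (subsetP S_P).
Qed.

Lemma ex_kill_step_over (g : {set V} -> R) (X Y : {set {set V}}) :
  injective_on K g -> X :|: Y \subset P -> kills alpha (X :|: Y) -> ~ kills alpha X ->
  exists2 w, w \in Y :\: X & kill_step w (X :|: [set p in Y | g p < g w]).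
Proof.
move=> g_inj XY_P k_XY nk_X.
have nk_X0 : ~ kills alpha (X :|: set0) by rewrite setU0.
have [w wY [k_le nk_lt]] := @ex_threshold _ _ _ (fun Z => kills alpha (X :|: Z)) g Y
  (fun A B AB => killsS (setUS X AB)) k_XY nk_X0.
have YK p : p \in Y -> p \in K.
  by move=> pY; apply: simplicesK; apply: (subsetP XY_P); rewrite inE pY orbT.
have le_split : X :|: [set p in Y | g p <= g w] \subset
                w |: (X :|: [set p in Y | g p < g w]).
  apply/subsetP => p; rewrite !inE => /orP[-> | /andP[pY]]; first by rewrite !orbT.
  rewrite le_eqVlt => /orP[/eqP eq_g | ->]; last by rewrite pY !orbT.
  by rewrite (g_inj p w (YK p pY) (YK w wY) eq_g) eqxx.
have wNX : w \notin X.
  apply/negP => wX; apply: nk_lt; apply: killsS k_le; apply: subset_trans le_split _.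
  by rewrite subUset sub1set inE wX subxx.
exists w; first by rewrite inE wNX.
split=> //; last exact: killsS k_le.
- rewrite subUset sub1set (subsetP XY_P) ?inE ?wY ?orbT //=.
  by apply: subset_trans XY_P; apply: setUS; apply/subsetP => p /setIdP[].
- by rewrite !inE negb_or wNX ltxx andbF.
Qed.

Lemma kill_step_Delta_is (g : {set V} -> R) tau L : injective_on K g ->
  kill_step tau L -> (forall p, p \in L -> g p < g tau) ->
  (forall u, u \in P :\: (tau |: L) -> g tau < g u) -> Delta_is K g n alpha tau.
Proof.
move=> g_inj [tauL_P tauNL k_tauL nk_L] L_below rest_above.
apply/Delta_isE => //; split; first by rewrite -sub1set (subset_trans _ tauL_P) ?subsetUl.
- apply: killsS k_tauL; apply/subsetP => p p_low; apply/setIdP.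
  split; first exact: (subsetP tauL_P).
  by case/setU1P: p_low => [-> // | /L_below/ltW].
- move=> k_lt; apply: nk_L; apply: killsS k_lt; apply/subsetP => p /setIdP[pP lt_p].
  apply/negPn/negP => pNL; have : p \in P :\: (tau |: L).
    rewrite in_setD pP andbT in_setU1 negb_or pNL andbT.
    by apply: contraTneq lt_p => ->; rewrite ltxx.
  by move/rest_above; rewrite ltNge (ltW lt_p).
Qed.

Lemma Sigma_kill_step (f : {set V} -> R) e tau : 0 < e ->
  tau \in Sigma K f n alpha e -> exists L, kill_step tau L /\ close_pairs f e tau L.
Proof.
move=> e_gt0; rewrite inE => /asboolP[g [[g_filt [g_inj g_near]] /(Delta_isE _ g_inj)]].
move=> g_first; have [tauP _ _] := g_first.
exists [set p in P | g p < g tau]; split; first exact: first_killer_kill_step.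
move=> p u /setU1P p_low /setDP[uP u_high].
have le_u : g tau <= g u by rewrite leNgt; apply: contra u_high => ?; apply/setIdP.
have [pP le_p] : p \in P /\ g p <= g tau.
  by case: p_low => [-> | /setIdP[pP /ltW]]; split.
have := g_near p (simplicesK pP); have := g_near u (simplicesK uP).
rewrite !ler_norml => /andP[? ?] /andP[? ?].
have [-> | ne_pu] := eqVneq p u; first by rewrite subrr pmulr_rgt0.
have : g p < g u.
  rewrite lt_neqAle (le_trans le_p le_u) andbT.
  by apply: contra ne_pu => /eqP/(g_inj _ _ (simplicesK pP) (simplicesK uP)) ->.
lra.
Qed.

Lemma first_killer_Sigma (f : {set V} -> R) e tau :
  filtration K f -> injective_on K f -> 0 <= e ->
  first_killer alpha f P tau -> tau \in Sigma K f n alpha e.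
Proof.
move=> f_filt f_inj e_ge0 f_first; rewrite inE; apply/asboolP.
by exists f; split; [split=> //; split=> // v _; rewrite subrr normr0 | exact/Delta_isE].
Qed.

Lemma Sigma_mono (f : {set V} -> R) e e' :
  e <= e' -> {subset Sigma K f n alpha e <= Sigma K f n alpha e'}.
Proof.
move=> le_e tau; rewrite !inE => /asboolP[g [[g_filt [g_inj g_near]] g_Delta]].
apply/asboolP; exists g; split=> //; split=> //; split=> // v vK.
exact: le_trans (g_near v vK) le_e.
Qed.

Section Staircase.
Variables (f : {set V} -> R) (tau : {set V}) (L : {set {set V}}) (h eta : R).
Hypotheses (f_filt : filtration K f) (tauP : tau \in P) (L_P : L \subset P).
Hypothesis tau_notin_L : tau \notin L.

(* [staircase] clamps [f] so that the faces of the simplices of [L] end up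
   below [h - eta], [tau] at exactly [h], and the cofaces of the other
   (n+1)-simplices above [h + eta]. *)
Definition below_L (v : {set V}) := [exists p in L, v \subset p].
Definition above_rest (v : {set V}) := [exists u in P :\: (tau |: L), u \subset v].

Definition stair_hi v :=
  if below_L v then h - eta else if v \subset tau then h else Num.max (f v) (h + eta).
Definition stair_lo v :=
  if above_rest v then h + eta else if tau \subset v then h else Num.min (f v) (h - eta).
Definition staircase v := clamp (f v) (stair_hi v) (stair_lo v).

Lemma stair_hi_mono v w : 0 <= eta -> v \in K -> w \in K -> v \subset w ->
  stair_hi v <= stair_hi w.
Proof.
move=> eta_ge0 vK wK vw; have le_f := f_filt vK wK vw; rewrite /stair_hi.
case: (boolP (below_L w)) => [/existsP[p /andP[pL wp]] | _] /=.
  by rewrite ifT //; apply/existsP; exists p; rewrite pL (subset_trans vw wp).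
case: (boolP (w \subset tau)) => [w_tau | _] /=.
  by rewrite (subset_trans vw w_tau); case: ifP => _ //; lra.
case: ifP => _; last case: ifP => _; last exact: le_max2.
- by rewrite le_max; apply/orP; right; lra.
- by rewrite le_max; apply/orP; right; lra.
Qed.

Lemma stair_lo_mono v w : 0 <= eta -> v \in K -> w \in K -> v \subset w ->
  stair_lo v <= stair_lo w.
Proof.
move=> eta_ge0 vK wK vw; have le_f := f_filt vK wK vw; rewrite /stair_lo.
case: ifP => [/existsP[u /andP[uU uv]] | _].
  by rewrite ifT //; apply/existsP; exists u; rewrite uU (subset_trans uv vw).
case: ifP => [tau_v | _].
  by rewrite (subset_trans tau_v vw); case: ifP => _ //; lra.
case: ifP => _; last case: ifP => _; last exact: le_min2.
- by rewrite ge_min; apply/orP; right; lra.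
- by rewrite ge_min; apply/orP; right; lra.
Qed.

Lemma staircase_filtration : 0 <= eta -> filtration K staircase.
Proof.
move=> eta_ge0 v w vK wK vw.
by apply: clamp_le; [exact: f_filt | exact: stair_hi_mono | exact: stair_lo_mono].
Qed.

Lemma staircase_close c : 0 < eta ->
  (forall p, p \in tau |: L -> f p <= h + c - eta) ->
  (forall u, u \in P :\: L -> h - c + eta <= f u) ->
  forall v, v \in K -> `|staircase v - f v| <= c.
Proof.
move=> eta_gt0 f_low f_high v vK; have tauK := simplicesK tauP.
have f_tau_low := f_low _ (setU11 tau L).
have f_tau_high : h - c + eta <= f tau by apply: f_high; rewrite inE tau_notin_L tauP.
apply: clamp_dist; rewrite ?/stair_hi ?/stair_lo; last by lra.
- case: ifP => [/existsP[p /andP[pL vp]] | _].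
    have := f_filt vK (simplicesK (subsetP L_P p pL)) vp.
    by have := f_low _ (setU1r tau pL); lra.
  case: ifP => [v_tau | _]; first by have := f_filt vK tauK v_tau; lra.
  by rewrite /Num.max; case: ltP => ?; lra.
- case: ifP => [/existsP[u /andP[/setDP[uP uNL] uv]] | _].
    have := f_filt (simplicesK uP) vK uv.
    have := f_high u; rewrite in_setD uP andbT; move: uNL; rewrite in_setU1 negb_or.
    by case/andP=> _ -> /(_ isT); lra.
  case: ifP => [tau_v | _]; first by have := f_filt tauK vK tau_v; lra.
  by rewrite /Num.min; case: ltP => ?; lra.
Qed.

Lemma staircase_tau : staircase tau = h.
Proof.
have nbelow : ~~ below_L tau.
  apply/negP => /existsP[p /andP[pL tau_p]]; move: tau_notin_L.
  by rewrite (simplices_antichain tauP (subsetP L_P p pL) tau_p) pL.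
have nabove : ~~ above_rest tau.
  apply/negP => /existsP[u /andP[/setDP[uP uN] u_tau]]; move: uN.
  by rewrite (simplices_antichain uP tauP u_tau) setU11.
rewrite /staircase /stair_hi /stair_lo (negbTE nbelow) (negbTE nabove) !subxx.
by apply/le_anti; rewrite clamp_le_hi ?clamp_ge_lo.
Qed.

Lemma staircase_L p : p \in L -> staircase p <= h - eta.
Proof.
move=> pL; have pP := subsetP L_P p pL.
have below : below_L p by apply/existsP; exists p; rewrite pL subxx.
have nabove : ~~ above_rest p.
  apply/negP => /existsP[u /andP[/setDP[uP uN] u_p]]; move: uN.
  by rewrite (simplices_antichain uP pP u_p) setU1r.
have ntau : ~~ (tau \subset p).
  apply/negP => tau_p; move: tau_notin_L.
  by rewrite (simplices_antichain tauP pP tau_p) pL.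
rewrite /staircase /stair_hi /stair_lo below (negbTE nabove) (negbTE ntau).
by rewrite clamp_le_hi // ge_min lexx orbT.
Qed.

Lemma staircase_rest u : u \in P :\: (tau |: L) -> h + eta <= staircase u.
Proof.
move=> uU; rewrite /staircase /stair_lo ifT ?clamp_ge_lo //.
by apply/existsP; exists u; rewrite uU subxx.
Qed.

End Staircase.

Lemma kill_step_Sigma (f : {set V} -> R) e tau L :
  filtration K f -> injective_on K f -> 0 < e ->
  kill_step tau L -> close_pairs f e tau L -> tau \in Sigma K f n alpha e.
Proof.
move=> f_filt f_inj e_gt0 st close; have [tauL_P tauNL _ _] := st.
have /andP[tauP L_P] : (tau \in P) && (L \subset P) by rewrite -sub1set -subUset.
have [pM pM_low pM_max] : exists2 pM, pM \in tau |: L &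
    forall p, p \in tau |: L -> f p <= f pM.
  by apply: ex_argmax; apply/set0Pn; exists tau; rewrite setU11.
have [uM uM_high uM_min] : exists2 uM, uM \in P :\: L &
    forall u, u \in P :\: L -> f uM <= f u.
  by apply: ex_argmin; apply/set0Pn; exists tau; rewrite inE tauNL tauP.
have d_lt := close _ _ pM_low uM_high; set d := f pM - f uM in d_lt.
pose h := (f pM + f uM) / 2; pose eta := (e - d / 2) / 2.
have eta_gt0 : 0 < eta by rewrite /eta; lra.
pose g0 := staircase f tau L h eta.
have g0_filt : filtration K g0 by apply: staircase_filtration; rewrite ?ltW.
have g0_near : forall v, v \in K -> `|g0 v - f v| <= d / 2 + eta.
  apply: staircase_close => // [p /pM_max | u /uM_min]; rewrite /h /d; lra.
have [g [g_filt g_inj g_near g_mono]] := ex_injective_nudge f_filt f_inj g0_filt eta_gt0.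
rewrite inE; apply/asboolP; exists g; split.
  split=> //; split=> // v vK; rewrite distrC (le_trans (ler_distD (g0 v) _ _)) //.
  by have := g_near v vK; have := g0_near v vK; rewrite /eta; lra.
have tauK := simplicesK tauP.
apply: kill_step_Delta_is st _ _ => // [p pL | u u_rest]; apply: g_mono => //.
- exact: simplicesK (subsetP L_P p pL).
- by rewrite /g0 staircase_tau //; have := staircase_L f h eta tauP L_P tauNL pL; lra.
- by case/setDP: u_rest => /simplicesK.
- by rewrite /g0 staircase_tau //; have := staircase_rest f h eta u_rest; lra.
Qed.

End Perturbation.

Lemma generic_gap_inj (V : finType) (R : realType) (K : {set {set V}}) (f : {set V} -> R)
    p u p' u' : generic K f -> p \in K -> u \in K -> p' \in K -> u' \in K ->
  0 < f p - f u -> f p - f u = f p' - f u' -> p = p' /\ u = u'.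
Proof.
move=> [_ f_gen] pK uK p'K u'K gap_gt0 eq_gap.
have ne_pu : p != u by apply: contraTneq gap_gt0 => ->; rewrite subrr ltxx.
have ne_pu' : p' != u' by apply: contraTneq gap_gt0 => eq'; rewrite eq_gap eq' subrr ltxx.
have := f_gen p u p' u' pK uK p'K u'K ne_pu ne_pu' (congr1 Num.norm eq_gap).
by case=> [// | [eq_p eq_u]]; subst p u; exfalso; lra.
Qed.

Section CriticalScale.
Variables (V : finType) (F : fieldType) (R : realType).
Variables (K : {set {set V}}) (n : nat) (f : {set V} -> R) (alpha : chain V F).
Variables (t0 : R) (Delta1 : {set V}).
Hypotheses (f_filt : filtration K f) (f_inj : injective_on K f) (t0_gt0 : 0 < t0).
Hypothesis Delta1_first : first_killer alpha f (simplices K n.+1) Delta1.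
Hypothesis Sigma_t0 : forall tau, tau \in Sigma K f n alpha t0 -> tau = Delta1.

Local Notation P := (simplices K n.+1).
Local Notation Sig := (Sigma K f n alpha).
Local Notation step := (kill_step K n alpha).
Local Notation close := (close_pairs K n f).

Lemma kill_step_t0 tau L : step tau L -> close t0 tau L -> tau = Delta1.
Proof.
by move=> st cl; apply: Sigma_t0; apply: kill_step_Sigma f_filt f_inj t0_gt0 st cl.
Qed.

Lemma Delta1_Sigma e : 0 <= e -> Delta1 \in Sig e.
Proof. by move=> e_ge0; apply: first_killer_Sigma. Qed.

Lemma not_kills_set0 : ~ kills alpha set0.
Proof.
have [_ _ nk_lt] := Delta1_first; apply: contra_not nk_lt.
by apply: killsS; apply: sub0set.
Qed.

Lemma lt_simplices p q : p \in P -> q \in P -> p != q -> f p <= f q -> f p < f q.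
Proof.
move=> pP qP ne_pq le_pq; rewrite lt_neqAle le_pq andbT.
by apply: contra ne_pq => /eqP/(f_inj (simplicesK pP) (simplicesK qP)) ->.
Qed.

Lemma ex_coface_killing_set (c : {set V}) : simplicial_complex K ->
  c \in K -> Delta1 \subset c -> #|c| = n.+3 ->
  exists S : {set {set V}}, [/\ S \subset P, Delta1 \notin S, kills alpha S,
                [set p in P | f p < f Delta1] \subset S &
                forall w, w \in S -> f w <= f c].
Proof.
move=> HK cK Delta_c size_c.
have [DeltaP k_le _] := Delta1_first; have size_Delta := simplices_size DeltaP.
have /properP[_ [v v_c vNDelta]] : Delta1 \proper c.
  by rewrite properEcard Delta_c size_c size_Delta ltnSn.
pose z := bd (elem F c).
have bd_z : bd z = 0 by apply/ffunP => t; rewrite bd_bd_elem ffunE.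
have z_Delta : z Delta1 != 0.
  rewrite /z; have -> : c = v |: Delta1.
    apply/eqP; rewrite eq_sym eqEcard subUset sub1set v_c Delta_c.
    by rewrite cardsU1 vNDelta size_c size_Delta add1n ltnSn.
  exact: bd_elem_facet.
have z_face w : z w != 0 -> w \in P /\ f w <= f c.
  case/bd_elem_supp => u u_c ->; have size_face : #|c :\ u| = n.+2.
    by move: (cardsD1 u c); rewrite u_c size_c add1n => -[].
  have face_K : c :\ u \in K.
    by apply: HK.2 cK (subsetDl _ _) _; rewrite -card_gt0 size_face.
  by rewrite inE face_K size_face eqxx; split=> //; apply: f_filt (subsetDl _ _).
have le_Delta_c := f_filt (simplicesK DeltaP) cK Delta_c.
exists (([set p in P | f p <= f Delta1] :|: [set w | z w != 0]) :\ Delta1); split.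
- apply/subsetP => w /setD1P[_ /setUP[/setIdP[] // | ]].
  by rewrite inE => /z_face[].
- by rewrite !inE eqxx.
- exact: kills_exchange bd_z z_Delta k_le.
- apply/subsetP => p /setIdP[pP lt_p]; apply/setD1P; split.
    by apply: contraTneq lt_p => ->; rewrite ltxx.
  by apply/setUP; left; apply/setIdP; split=> //; apply: ltW.
- move=> w /setD1P[_ /setUP[/setIdP[_ le_w] | ]]; first exact: le_trans le_Delta_c.
  by rewrite inE => /z_face[].
Qed.

Lemma coface_Sigma (c : {set V}) e : simplicial_complex K ->
  c \in K -> Delta1 \subset c -> #|c| = n.+3 -> f c - f Delta1 < 2 * e -> 0 < e ->
  exists2 w, w \in Sig e & w != Delta1.
Proof.
move=> HK cK Delta_c size_c close_c e_gt0.
have [S [S_P DeltaNS k_S lt_S S_c]] := ex_coface_killing_set HK cK Delta_c size_c.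
have [DeltaP _ nk_lt] := Delta1_first.
have [w w_first] := ex_first_killer f k_S not_kills_set0; have [wS k_w _] := w_first.
have ne_w : w != Delta1 by apply: contraNneq DeltaNS => <-.
have Delta_w : f Delta1 < f w.
  rewrite ltNge; apply/negP => le_w; apply: nk_lt; apply: killsS k_w.
  apply/subsetP => p /setIdP[pS le_p]; have pP := subsetP S_P p pS.
  apply/setIdP; split=> //; apply: lt_simplices (le_trans le_p le_w) => //.
  by apply: contraNneq DeltaNS => <-.
exists w => //; apply: (kill_step_Sigma f_filt f_inj e_gt0).
  exact: first_killer_kill_step f_inj S_P w_first.
move=> p u /setU1P p_low /setDP[uP u_high].
have le_p : f p <= f w by case: p_low => [-> // | /setIdP[_ /ltW]].
have [le_u | lt_u] := leP (f w) (f u); first by lra.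
have : f Delta1 <= f u.
  rewrite leNgt; apply: contra u_high => lt_Delta; apply/setIdP; split=> //.
  by apply: (subsetP lt_S); apply/setIdP.
have := S_c w wS; lra.
Qed.

Lemma first_killer_maximal s : simplicial_complex K -> s < t0 ->
  maximal_in (sublevel K f (f Delta1 + 2 * s)) Delta1.
Proof.
move=> HK lt_s t /setIdP[tK le_t] /properP[Delta_t [v v_t vNDelta]].
have [DeltaP _ _] := Delta1_first.
have c_t : v |: Delta1 \subset t by rewrite subUset sub1set v_t Delta_t.
have cK : v |: Delta1 \in K.
  by apply: HK.2 tK c_t _; apply/set0Pn; exists v; rewrite setU11.
have size_c : #|v |: Delta1| = n.+3 by rewrite cardsU1 vNDelta (simplices_size DeltaP).
have le_c := f_filt cK tK c_t.
have lt_c : f (v |: Delta1) - f Delta1 < 2 * t0 by lra.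
have [w /Sigma_t0 ->] := coface_Sigma HK cK (subsetUr _ _) size_c lt_c t0_gt0.
by rewrite eqxx.
Qed.

Lemma ex_Sigma_window (c : R) :
  (exists x, 0 < x <= c /\ (2 <= #|Sig x|)%N) ->
  (forall x, 0 < x <= c -> #|Sig x| = 1%N -> x <= t0) ->
  exists2 x0, t0 < x0 &
    forall x, t0 < x <= x0 -> exists2 tau, tau \in Sig x & tau != Delta1.
Proof.
move=> [x0 [/andP[x0_gt0 x0_le] card_x0]] t0_max; have t0_pos := t0_gt0.
have t0_x0 : t0 < x0.
  rewrite ltNge; apply/negP => le_x0.
  have : (#|Sig x0| <= #|[set Delta1]|)%N.
    apply/subset_leq_card/subsetP => tau /(Sigma_mono le_x0)/Sigma_t0 ->.
    exact: set11.
  by rewrite cards1 leqNgt card_x0.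
exists x0 => // x /andP[t0_x x_x0].
have DeltaSx : Delta1 \in Sig x by apply: Delta1_Sigma; lra.
apply/exists_inP; apply: contraTT (t0_x) => /exists_inPn all_Delta.
rewrite -leNgt; apply: t0_max; first by apply/andP; split; lra.
apply/eqP/cards1P; exists Delta1; apply/setP => tau; rewrite inE.
by apply/idP/eqP => [/all_Delta/negPn/eqP | ->].
Qed.

(* A cut [L] witnessing an element [tau <> Delta1] of [Sig x] for [x] just
   above [t0]: [(s2, s1)] is the only pair allowed at scale [x] but not at
   scale [t0]. *)
Record critical_pair (tau : {set V}) (L : {set {set V}}) (s1 s2 : {set V}) : Prop := {
  critical_step : step tau L;
  critical_tau_neq : tau != Delta1;
  critical_s2_low : s2 \in tau |: L;
  critical_s1_high : s1 \in P :\: L;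
  critical_gap : f s2 - f s1 = 2 * t0;
  critical_pairs : forall p u, p \in tau |: L -> u \in P :\: L ->
    f p - f u < 2 * t0 \/ (p = s2 /\ u = s1) }.

Lemma ex_critical_pair : generic K f ->
  (exists2 x0, t0 < x0 &
     forall x, t0 < x <= x0 -> exists2 tau, tau \in Sig x & tau != Delta1) ->
  exists tau L s1 s2, critical_pair tau L s1 s2.
Proof.
move=> f_gen [x0 t0_x0 new_tau].
pose far := [set pu | [&& pu.1 \in P, pu.2 \in P & 2 * t0 < f pu.1 - f pu.2]].
have [m m_gt0 m_le] := @ex_pos_lower_bound _ _ far (fun pu => (f pu.1 - f pu.2) / 2 - t0)
  (fun pu => ltac:(rewrite inE => /and3P[_ _ ?]; lra)).
pose x := Num.min x0 (t0 + m).
have t0_x : t0 < x by rewrite lt_min t0_x0 /=; lra.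
have no_gap p u : p \in P -> u \in P -> f p - f u < 2 * x -> f p - f u <= 2 * t0.
  move=> pP uP lt_x; rewrite leNgt; apply/negP => far_pu.
  have := m_le (p, u); rewrite inE pP uP far_pu => /(_ isT) /=.
  have : x <= t0 + m by rewrite ge_min lexx orbT.
  lra.
have x_win : t0 < x <= x0 by rewrite t0_x ge_min lexx.
have [tau tau_Sig tau_new] := new_tau x x_win.
have [L [st_L close_L]] := Sigma_kill_step (lt_trans t0_gt0 t0_x) tau_Sig.
have [tauL_P _ _ _] := st_L.
have [s2 [s1 [s2_low s1_high ge_gap]]] :
    exists p u, [/\ p \in tau |: L, u \in P :\: L & 2 * t0 <= f p - f u].
  apply: contrapT => none; move/eqP: tau_new; apply; apply: kill_step_t0 st_L _.
  move=> p u p_low u_high; rewrite ltNge; apply/negP => ge; apply: none.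
  by exists p, u.
have s2P := subsetP tauL_P s2 s2_low; have s1P : s1 \in P by case/setDP: s1_high.
have gap : f s2 - f s1 = 2 * t0.
  by apply/le_anti; rewrite ge_gap (no_gap _ _ s2P s1P (close_L _ _ s2_low s1_high)).
exists tau, L, s1, s2; split=> // p u p_low u_high.
have pP := subsetP tauL_P p p_low; have uP : u \in P by case/setDP: u_high.
have [lt | ge] := ltP (f p - f u) (2 * t0); [by left | right].
have eq_gap : f p - f u = f s2 - f s1.
  by rewrite gap; apply/le_anti; rewrite ge (no_gap _ _ pP uP (close_L _ _ p_low u_high)).
have gap_gt0 : 0 < f p - f u by have := t0_gt0; lra.
exact: generic_gap_inj f_gen (simplicesK pP) (simplicesK uP)
  (simplicesK s2P) (simplicesK s1P) gap_gt0 eq_gap.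
Qed.

Section CriticalPair.
Variables (tau : {set V}) (L : {set {set V}}) (s1 s2 : {set V}).
Hypothesis crit : critical_pair tau L s1 s2.

Lemma critical_s1P : s1 \in P.
Proof. by case/setDP: (critical_s1_high crit). Qed.

Lemma critical_s2P : s2 \in P.
Proof. by have [[tauL_P _ _ _] _ s2_low _ _ _] := crit; apply: (subsetP tauL_P). Qed.

Lemma critical_s12 : s1 != s2.
Proof.
have gap := critical_gap crit; have t0_pos := t0_gt0.
by apply/eqP => eq_s; move: gap; rewrite eq_s subrr; lra.
Qed.

Lemma critical_s1_min u : u \in P :\: L -> f s1 <= f u.
Proof.
move=> u_high; have [_ _ s2_low _ gap pairs] := crit.
by case: (pairs s2 u s2_low u_high) => [? | [_ ->]] //; lra.
Qed.

Lemma critical_s2_max p : p \in tau |: L -> f p <= f s2.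
Proof.
move=> p_low; have [_ _ _ s1_high gap pairs] := crit.
by case: (pairs p s1 p_low s1_high) => [? | [-> _]] //; lra.
Qed.

Lemma critical_close tg L' : tg |: L' \subset s1 |: (tau |: L) ->
  L :\ s2 \subset L' -> (s2 \in tg |: L' -> s1 \in L') -> close t0 tg L'.
Proof.
move=> low_sub high_sub s2_s1 p u p_low /setDP[uP uNL'].
have [_ _ _ _ gap pairs] := crit; have := t0_gt0.
have [-> | ne_u] := eqVneq u s2.
  case/setU1P: (subsetP low_sub p p_low) => [-> | /critical_s2_max]; lra.
have u_high : u \in P :\: L.
  rewrite inE uP andbT; apply: contra uNL' => uL.
  by apply: (subsetP high_sub); rewrite !inE ne_u.
case/setU1P: (subsetP low_sub p p_low) => [-> | p_low'].
  by have := critical_s1_min u_high; lra.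
case: (pairs p u p_low' u_high) => // -[eq_p eq_u].
by move: uNL'; rewrite eq_u s2_s1 // -eq_p.
Qed.

Lemma critical_cut_not_kills : ~ kills alpha ((tau |: L) :\ s2).
Proof.
have [[tauL_P tauNL k_tauL nk_L] tau_new _ _ _ _] := crit.
have [eq_s2 | ne_s2] := eqVneq s2 tau; first by rewrite eq_s2 setU1K.
move=> k_A; move/eqP: tau_new; apply; apply: (@kill_step_t0 _ (L :\ s2)).
  split=> //.
  - by apply: subset_trans tauL_P; apply: setUS; apply: subsetDl.
  - by rewrite !inE negb_and tauNL orbT.
  - apply: killsS k_A; apply/subsetP => p; rewrite !inE.
    by case/andP=> -> /orP[-> | ->]; rewrite ?orbT.
  - by apply: contra_not nk_L; apply: killsS; apply: subsetDl.
apply: critical_close => //.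
  by rewrite setUCA; apply: setUS; apply: subset_trans (subsetDl _ _) (subsetUr _ _).
by rewrite !inE eqxx (negbTE ne_s2).
Qed.

Lemma critical_Delta1 : Delta1 = s1 \/ Delta1 = s2.
Proof.
have [[tauL_P _ k_tauL _] _ s2_low _ _ _] := crit.
have [s1P s2P] := (critical_s1P, critical_s2P).
pose A := (tau |: L) :\ s2.
have A_P : A \subset P by apply: subset_trans tauL_P; apply: subsetDl.
have L_A : L :\ s2 \subset A by apply: setSD; apply: subsetUr.
have nk_A : ~ kills alpha A := critical_cut_not_kills.
have k_all : kills alpha (s2 |: (s1 |: A)).
  apply: killsS k_tauL; apply/subsetP => p p_low.
  have [-> | ne_p] := eqVneq p s2; first exact: setU11.
  by apply/setU1P; right; apply/setU1P; right; rewrite in_setD1 ne_p.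
have [k_s1A | nk_s1A] := pselect (kills alpha (s1 |: A)).
  left; symmetry; apply: (@kill_step_t0 _ A).
    split=> //; first by rewrite subUset sub1set s1P.
    by apply/negP => s1A; apply: nk_A; move: k_s1A; rewrite (setUidPr _) // sub1set.
  apply: critical_close => //; first by apply: setUS; apply: subsetDl.
  by rewrite !inE eq_sym (negbTE critical_s12) eqxx.
right; symmetry; apply: (@kill_step_t0 _ (s1 |: A)).
  split=> //; first by rewrite !subUset !sub1set s1P s2P.
  by rewrite !inE negb_or eq_sym critical_s12 eqxx.
apply: critical_close => //.
- by rewrite setUCA setUS // subUset sub1set s2_low subsetDl.
- by apply: subset_trans L_A (subsetUr _ _).
- by rewrite !setU11.
Qed.

Lemma no_step_inside_window w L' : step w L' -> f s1 < f w < f s2 ->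
  (forall p, p \in w |: L' -> f p <= f w \/ p = s2) ->
  (forall u, u \in P :\: L' -> f w <= f u \/ u = s1) ->
  (s2 \in w |: L' -> s1 \in L') -> False.
Proof.
move=> st_w /andP[lt1 lt2] low high s2_s1.
have gap := critical_gap crit.
suff w_Delta : w = Delta1.
  by case: critical_Delta1 => eq_D; move: lt1 lt2; rewrite w_Delta eq_D ltxx // andbF.
apply: kill_step_t0 st_w _ => p u p_low u_high; have := t0_gt0.
case: (low p p_low) => [le_p | eq_p]; case: (high u u_high) => [le_u | eq_u];
  subst; try lra.
by move: u_high; rewrite inE s2_s1.
Qed.

Lemma critical_terminal_step :
  Delta1 = s2 -> step s1 (s2 |: [set p in P | f p < f s1]).
Proof.
move=> Delta_s2; have t0_pos := t0_gt0.
have [[_ _ _ nk_L] tau_new s2_low _ gap _] := crit.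
have [s1P s2P] := (critical_s1P, critical_s2P).
have s2L : s2 \in L.
  by case/setU1P: s2_low => // eq_s2; move: tau_new; rewrite Delta_s2 eq_s2 eqxx.
pose B := [set p in P | f p < f s1].
have nk_B : ~ kills alpha (s2 |: B).
  apply: contra_not nk_L; apply: killsS; rewrite subUset sub1set s2L.
  apply/subsetP => p /setIdP[pP lt_p]; apply: contraTT lt_p => pNL.
  by rewrite -leNgt critical_s1_min // inE pNL.
have [_ k_le _] := Delta1_first; rewrite Delta_s2 in k_le.
pose Y := [set p in P | f p <= f s2].
have [w /setDP[/setIdP[wP le_w] wNX] st_w] : exists2 w, w \in Y :\: (s2 |: B) &
    step w ((s2 |: B) :|: [set p in Y | f p < f w]).
  apply: ex_kill_step_over f_inj _ _ nk_B; last by apply: killsS k_le; apply: subsetUr.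
  rewrite !subUset sub1set s2P; apply/andP; split;
    by apply/subsetP => p /setIdP[].
have Y_lt_s1 : [set p in Y | f p < f s1] \subset B.
  by apply/subsetP => p /setIdP[/setIdP[pP _] lt_p]; apply/setIdP.
suff w_s1 : w = s1 by move: st_w; rewrite w_s1 (setUidPl _) // subsetU // Y_lt_s1 orbT.
have [// | ne_w] := eqVneq w s1; exfalso.
move: wNX; rewrite in_setU1 negb_or => /andP[ne_w2 wNB].
have ge_w : f s1 <= f w by rewrite leNgt; apply: contra wNB => ?; apply/setIdP.
have lt1 : f s1 < f w by apply: lt_simplices => //; rewrite eq_sym.
have lt2 := lt_simplices wP s2P ne_w2 le_w.
apply: (no_step_inside_window st_w); first by rewrite lt1 lt2.
- move=> p /setU1P[-> | /setUP[/setU1P[-> | /setIdP[_ ?]] | /setIdP[_ /ltW ?]]];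
    by [left | right | left; lra].
- move=> u /setDP[uP]; rewrite in_setU negb_or => /andP[_ uNlt].
  left; rewrite leNgt; apply: contra uNlt => lt_u.
  by apply/setIdP; split=> //; apply/setIdP; split=> //; lra.
- by move=> _; apply/setUP; right; apply/setIdP; split=> //; apply/setIdP; split=> //; lra.
Qed.

Lemma critical_terminal t : Delta1 = s2 -> t0 < t ->
  [/\ s1 \in Sig t, s2 \in Sig t & @terminal_simplex V F R K f s1].
Proof.
move=> Delta_s2 t0_t; have t0_pos := t0_gt0; have gap := critical_gap crit.
have st_s1 := critical_terminal_step Delta_s2; have [_ _ k_s1 nk_B] := st_s1.
split.
- apply: kill_step_Sigma f_filt f_inj _ st_s1 _ => [| p u p_low /setDP[uP uNB]]; first lra.
  have le_u : f s1 <= f u.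
    by rewrite leNgt; apply: contra uNB => lt_u; apply/setU1P; right; apply/setIdP.
  have le_p : f p <= f s2.
    by case/setU1P: p_low => [-> | /setU1P[-> | /setIdP[_ ?]]]; lra.
  lra.
- by rewrite -Delta_s2; apply: Delta1_Sigma; lra.
move=> s1_birth; apply: nk_B.
apply: (birth_simplex_redundant s1_birth critical_s1P) k_s1; last exact: subsetUr.
by rewrite !inE negb_or critical_s12 ltxx andbF.
Qed.

Lemma critical_birth_killer :
  Delta1 = s1 -> first_killer alpha f ([set p in P | f p <= f s2] :\ s1) s2.
Proof.
move=> Delta_s1.
have [[tauL_P _ k_tauL _] tau_new _ s1_high _ _] := crit.
have [s1P s2P] := (critical_s1P, critical_s2P).
have [_ _ nk_lt] := Delta1_first; rewrite Delta_s1 in nk_lt.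
pose T := [set p in P | f p <= f s2] :\ s1.
have T_P : T \subset P by apply/subsetP => p /setD1P[_ /setIdP[]].
have tauL_T : tau |: L \subset T.
  apply/subsetP => p p_low; apply/setD1P; split.
    apply: contraTneq p_low => ->; rewrite in_setU1 negb_or eq_sym -Delta_s1 tau_new /=.
    by rewrite Delta_s1; case/setDP: s1_high.
  by apply/setIdP; split; [exact: (subsetP tauL_P) | exact: critical_s2_max].
have [w w_first] := ex_first_killer f (killsS tauL_T k_tauL) not_kills_set0.
have st_w := first_killer_kill_step f_inj T_P w_first.
have [/setD1P[ne_w /setIdP[wP le_w]] _ _] := w_first.
have lt_s1w : f s1 < f w.
  rewrite ltNge; apply/negP => le_ws1; apply: nk_lt.
  have lt_ws1 := lt_simplices wP s1P ne_w le_ws1.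
  have [_ _ k_w _] := st_w; apply: killsS k_w.
  apply/subsetP => p /setU1P[-> | /setIdP[/setD1P[_ /setIdP[pP _]] lt_p]]; apply/setIdP.
    by [].
  by split=> //; lra.
suff w_s2 : w = s2 by move: w_first; rewrite w_s2.
have [// | ne_w2] := eqVneq w s2; exfalso.
have lt2 := lt_simplices wP s2P ne_w2 le_w.
apply: (no_step_inside_window st_w); first by rewrite lt_s1w lt2.
- by move=> p /setU1P[-> | /setIdP[_ /ltW ?]]; left.
- move=> u /setDP[uP uNL]; have [-> | ne_u] := eqVneq u s1; [by right | left].
  rewrite leNgt; apply: contra uNL => lt_u; apply/setIdP; split=> //.
  by apply/setD1P; split=> //; apply/setIdP; split=> //; lra.
- by move=> /setU1P[eq_w | /setIdP[_]]; [move: ne_w2; rewrite eq_w eqxx | lra].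
Qed.

Lemma critical_birth t : Delta1 = s1 -> t0 < t ->
  [/\ s1 \in Sig t, s2 \in Sig t & @birth_simplex V F R K f s2].
Proof.
move=> Delta_s1 t0_t; have t0_pos := t0_gt0; have gap := critical_gap crit.
have [s1P s2P] := (critical_s1P, critical_s2P).
have T_P : [set p in P | f p <= f s2] :\ s1 \subset P.
  by apply/subsetP => p /setD1P[_ /setIdP[]].
have st_s2 := first_killer_kill_step f_inj T_P (critical_birth_killer Delta_s1).
have [_ _ k_s2 nk_lt2] := st_s2.
split.
- by rewrite -Delta_s1; apply: Delta1_Sigma; lra.
- apply: kill_step_Sigma f_filt f_inj _ st_s2 _ => [| p u p_low /setDP[uP uNL]]; first lra.
  have le_p : f p <= f s2 by case/setU1P: p_low => [-> | /setIdP[_ /ltW]].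
  have [-> | ne_u] := eqVneq u s1; first lra.
  have : f s2 <= f u.
    rewrite leNgt; apply: contra uNL => lt_u; apply/setIdP; split=> //.
    by apply/setD1P; split=> //; apply/setIdP; split=> //; apply: ltW.
  lra.
apply: (birth_simplex_of_kills s2P _ k_s2 nk_lt2).
  by apply/subsetP => p /setIdP[/setD1P[_ /setIdP[pP _]] lt_p]; apply/setIdP.
have [_ k_le _] := Delta1_first; rewrite Delta_s1 in k_le.
apply: killsS k_le; apply/subsetP => p /setIdP[pP le_p]; apply/setIdP; split=> //.
by lra.
Qed.

Lemma critical_pair_spec :
  [/\ s1 \in P, s2 \in P, f s2 - f s1 = 2 * t0, Delta1 = s1 \/ Delta1 = s2 &
      forall t, t0 < t ->
        (Delta1 = s2 -> [/\ s1 \in Sig t, s2 \in Sig t & @terminal_simplex V F R K f s1]) /\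
        (Delta1 = s1 -> [/\ s1 \in Sig t, s2 \in Sig t & @birth_simplex V F R K f s2])].
Proof.
split; [exact: critical_s1P | exact: critical_s2P | exact: critical_gap crit |
        exact: critical_Delta1 | ].
by move=> t t0_t; split=> [Delta_s2 | Delta_s1];
  [exact: critical_terminal | exact: critical_birth].
Qed.

End CriticalPair.

End CriticalScale.

From mathcomp Require Import all_classical all_reals all_analysis.
Import numFieldNormedType.Exports.
Local Open Scope classical_set_scope.
Local Open Scope ring_scope.

Unset Implicit Arguments.

Theorem proposition3p4 (V : finType) (F : fieldType) (R : realType)
  (K : {set {set V}}) (n : nat) (f : {set V} -> R)
  (alpha : chain V F) (a b : R) :
  simplicial_complex K -> (0 < n)%N ->
  filtration K f -> generic K f ->
  (* [alpha] is a nontrivial class of H_n(K^f_a) *)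
  is_cycle (sublevel K f a) n alpha ->
  ~ is_boundary (sublevel K f a) n alpha ->
  (* born at a, terminated at the finite value b > a *)
  birth K f n alpha a = a ->
  (exists q, death_set K f n alpha a q) ->
  termination K f n alpha a = b ->
  a < b ->
  let D := fun x : R => 0 < x <= (b - a) / 2 in
  let Sig := Sigma K f n alpha in
  (exists x, D x /\ (2 <= #|Sig x|)%N) ->
  forall t0 : R, D t0 -> #|Sig t0| = 1%N ->
  (forall x, D x -> #|Sig x| = 1%N -> x <= t0) ->
  forall Delta1 : {set V}, Sig t0 = [set Delta1]%SET ->
  exists si sj : {set V},
    [/\ si \in K, #|si| = n.+2, sj \in K, #|sj| = n.+2 &
        f sj - t0 = f si + t0] /\
    (* (1) *) (Delta1 = si \/ Delta1 = sj) /\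
    (* (2) *) (forall s, s < t0 ->
                 maximal_in (sublevel K f (f Delta1 + 2 * s)) Delta1) /\
    (forall t : R, D t -> t0 < t ->
       ((fun x => (#|Sig x|)%:R : R) x @[x --> t0^'+] --> ((#|Sig t|)%:R : R)) ->
       (* (3) *) (Delta1 = sj ->
                  [/\ si \in Sig t, sj \in Sig t & @terminal_simplex V F R K f si]) /\
       (* (4) *) (Delta1 = si ->
                  [/\ si \in Sig t, sj \in Sig t & @birth_simplex V F R K f sj])).
Proof.
move=> HK _ f_filt f_gen _ not_bd _ [q [_ bd_q]] _ _ D Sig Sig_2 t0 /andP[t0_gt0 _] _
  t0_max Delta1 Sig_t0.
have f_inj := f_gen.1.
have Sig_t0_Delta1 tau : tau \in Sig t0 -> tau = Delta1 by rewrite Sig_t0 inE => /eqP.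
have [w w_first] := ex_first_killer_simplices not_bd bd_q.
have w_Delta1 := Sig_t0_Delta1 _ (first_killer_Sigma f_filt f_inj (ltW t0_gt0) w_first).
subst w.
have [tau [L [s1 [s2 crit]]]] := ex_critical_pair f_filt f_inj t0_gt0 Sig_t0_Delta1
  f_gen (ex_Sigma_window f_filt f_inj t0_gt0 w_first Sig_t0_Delta1 Sig_2 t0_max).
have [s1P s2P gap D12 s12_Sig] :=
  critical_pair_spec f_filt f_inj t0_gt0 w_first Sig_t0_Delta1 crit.
exists s1, s2; split.
  split; [exact: simplicesK s1P | exact: simplices_size s1P |
          exact: simplicesK s2P | exact: simplices_size s2P | lra].
split; first by case: D12 => ->; [left | right].
split; first by move=> s; apply: (first_killer_maximal f_filt f_inj t0_gt0 w_first).
by move=> t _ t0_t _; apply: s12_Sig.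
Qed.
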